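(* Fix constants $c,C,s_0,s_1,T>0$. Then there exists $N$ (depending only on these constants) such that the following holds for every $n\ge N$. Let $A$ be an $n\times n$ real symmetric positive definite matrix with diagonal entries $a_1<a_2<\dots<a_n$, satisfying $|a_k-a_l|\ge cn$ for $k\ne l$ and $r_k=\sum_{l\ne k}|A(k,l)|\le C$ for all $k$. Let $S$ be an $n\times n$ real symmetric matrix with $s_0\le S(k,k)\le s_1$ for all $k$ and $|S(k,l)|\le s_1/n$ for all $k\ne l$, and let $0<t\le T$. Let $\lambda_1\le\dots\le\lambda_n$ be the eigenvalues of $A$ and $\tilde\lambda_1\le\dots\le\tilde\lambda_n$ the eigenvalues of $A+tS$. Then $$\lambda_1\le\tilde\lambda_1\le\lambda_2\le\tilde\lambda_2\le\cdots\le\lambda_n\le\tilde\lambda_n.$$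
   Context: This formalizes the setting ''diagonal separation $\mathcal{O}(n)$, off-diagonal row sums $\mathcal{O}(1)$ for $A$; perturbation $S$ with off-diagonal entries $\mathcal{O}(1/n)$, positive diagonal entries $\mathcal{O}(1)$; $t>0$, $t=\mathcal{O}(1)$''. *)

From mathcomp Require Import all_boot all_order all_algebra.
From mathcomp Require Import reals.
Set Implicit Arguments. Unset Strict Implicit. Unset Printing Implicit Defensive.
Import Order.TTheory GRing.Theory Num.Theory.
Local Open Scope ring_scope.

Definition symmetric_mx (R : realType) (n : nat) (M : 'M[R]_n) : Prop :=
  M^T = M.

Definition posdef_mx (R : realType) (n : nat) (M : 'M[R]_n) : Prop :=
  symmetric_mx M /\ forall v : 'rV[R]_n, v != 0 -> 0 < (v *m M *m v^T) 0 0.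

Definition sorted_eigenvalues (R : realType) (n : nat) (M : 'M[R]_n)
    (l : seq R) : Prop :=
  [/\ size l = n, sorted <=%R l &
      char_poly M = \prod_(x <- l) ('X - x%:P)].

From mathcomp Require Import all_boot all_order all_algebra.
From mathcomp Require Import reals.
From mathcomp Require Import zify ring lra.
Set Implicit Arguments. Unset Strict Implicit. Unset Printing Implicit Defensive.
Import Order.TTheory GRing.Theory Num.Theory.
Local Open Scope ring_scope.

(* The key fact is a spectral localization principle for a symmetric matrix M
   with off-diagonal row sums <= K and diagonal gaps >= g > 2 K.  An
   eigenvector whose largest entry is 1, at index j ("centred at j"), has its
   eigenvalue within K of M j j and all other entries at most
   eps = K / (g - K) ([localization]).  Two eigenvectors centred at the same
   index coincide ([centred_eigen_unique]), so, M being diagonalizable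
   ([sym_diagonalizable]), its k-th sorted eigenvalue is within K of M k k and
   has an eigenvector centred at k ([spectral_localization]).

   Both A and A + t S satisfy these hypotheses with K = C + T s1 and
   g = c n - T s1, with eps = O(1/n).  For the centred eigenvectors v of A and
   w of A + t S at index i, (lamt_i - lam_i) <w, v> = t w S v^T
   ([eigen_shift]), and both <w, v> and w S v^T are positive for n large
   ([dot_ge_localized], [form_lower_bound]): this is lam_i <= lamt_i.  The
   inequality lamt_i <= lam_(i+1) follows from localization and the gap
   between A i i and A (i+1) (i+1). *)

Section SymmetricDiagonalization.
Variable R : realFieldType.

(* Over an ordered field, X X^T = 0 forces X = 0: the diagonal entries of
   X X^T are the sums of squares of the rows of X. *)
Lemma mulmx_trmx_eq0 n (X : 'M[R]_n) : X *m X^T = 0 -> X = 0.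
Proof.
move=> XXt0; apply/matrixP => i j; rewrite mxE.
have /eqP := congr1 (fun M : 'M[R]_n => M i i) XXt0; rewrite !mxE.
rewrite psumr_eq0; last by move=> k _; rewrite mxE -expr2 sqr_ge0.
move/allP => /(_ j (mem_index_enum _)) /implyP /(_ isT).
by rewrite mxE -expr2 sqrf_eq0 => /eqP.
Qed.

Lemma trmx_exp_sym n (B : 'M[R]_n.+1) k : B^T = B -> (B ^+ k)^T = B ^+ k.
Proof.
move=> sB; elim: k => [|k IH]; first by rewrite !expr0 tr_scalar_mx.
by rewrite exprS -mulmxE trmx_mul IH sB !mulmxE -exprSr -exprS.
Qed.

(* A nilpotent symmetric matrix is zero: if B^m = 0 with m >= 2, then for
   k = m - m/2 < m we get B^k (B^k)^T = B^(2k) = 0, hence B^k = 0. *)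
Lemma sym_nilpotent_eq0 n (B : 'M[R]_n.+1) m : B^T = B -> B ^+ m = 0 -> B = 0.
Proof.
move=> sB; elim/ltn_ind: m => m IH Bm0.
case: m IH Bm0 => [|[|m]] IH Bm0.
- by move/eqP: Bm0; rewrite expr0 oner_eq0.
- by rewrite -(expr1 B).
- pose k := (m.+2 - m.+2./2)%N.
  have k_lt : (k < m.+2)%N by rewrite /k; lia.
  apply: (IH k k_lt); apply: mulmx_trmx_eq0.
  have kk : (k + k = m.+2 + (k + k - m.+2))%N.
    have := odd_double_half m.+2; rewrite /k -addnn; lia.
  by rewrite trmx_exp_sym // mulmxE -exprD kk exprD Bm0 mul0r.
Qed.

Lemma trmx_horner_sym n (M : 'M[R]_n.+1) p :
  M^T = M -> (horner_mx M p)^T = horner_mx M p.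
Proof.
move=> sM; elim/poly_ind: p => [|p c IH]; first by rewrite rmorph0 trmx0.
rewrite rmorphD rmorphM /= horner_mx_X horner_mx_C linearD /= tr_scalar_mx.
rewrite -mulmxE trmx_mul IH sM; congr (_ + _).
by have := comm_mx_horner p (comm_mx_refl M); rewrite /comm_mx.
Qed.

End SymmetricDiagonalization.

Lemma prod_XsubC_dvd_undup (F : idomainType) (s : seq F) :
  \prod_(x <- s) ('X - x%:P) %| (\prod_(x <- undup s) ('X - x%:P)) ^+ size s.
Proof.
elim: s => [|x s IH]; first by rewrite !big_nil expr0 dvdpp.
rewrite [size _]/= big_cons exprS; apply: dvdp_mul.
  by rewrite dvdp_XsubCl root_prod_XsubC mem_undup inE eqxx.
apply: dvdp_trans IH _; apply: dvdp_exp2r => /=.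
case: ifP => _; first exact: dvdpp.
by rewrite big_cons dvdp_mulIr.
Qed.

(* A real symmetric matrix whose characteristic polynomial splits is
   diagonalizable: its minimal polynomial divides a power of the square-free
   part of the characteristic polynomial, and the square-free part itself
   annihilates the matrix because a nilpotent symmetric matrix vanishes. *)
Lemma sym_diagonalizable (R : realFieldType) n (M : 'M[R]_n.+1) (lam : seq R) :
  M^T = M -> size lam = n.+1 -> char_poly M = \prod_(x <- lam) ('X - x%:P) ->
  exists2 P : 'M[R]_n.+1, P \in unitmx & is_diag_mx (P *m M *m invmx P).
Proof.
move=> sM slam cM.
have [P Pu HP] : exists2 P : 'M_n.+1, P \in unitmx & similar_diag P M.
  apply/diagonalizableP; exists (undup lam); first exact: undup_uniq.
  rewrite dvd_mxminpoly; apply/eqP.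
  apply: (@sym_nilpotent_eq0 _ _ _ n.+1); first exact: trmx_horner_sym.
  rewrite -rmorphXn /=; apply/eqP; rewrite -dvd_mxminpoly.
  apply: dvdp_trans (mxminpoly_dvd_char M) _.
  by rewrite cM -slam; apply: prod_XsubC_dvd_undup.
by exists P => //; rewrite -conjumx.
Qed.

Section RowVectors.
Variables (R : realFieldType) (n : nat).
Implicit Types (u v w : 'rV[R]_n).

Lemma sum_le_card (P : pred 'I_n) (F : 'I_n -> R) (B : R) :
  0 <= B -> (forall l, P l -> F l <= B) -> \sum_(l < n | P l) F l <= n%:R * B.
Proof.
move=> B0 FB; apply: le_trans (ler_sum _ FB) _.
rewrite big_mkcond /= (@le_trans _ _ (\sum_(l < n) B)) //.
  by apply: ler_sum => l _; case: ifP.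
by rewrite sumr_const card_ord mulr_natl.
Qed.

Lemma mulmx_trmx_row u w : (u *m w^T) 0 0 = \sum_l u 0 l * w 0 l.
Proof. by rewrite mxE; apply: eq_bigr => l _; rewrite mxE. Qed.

Definition centred u (j : 'I_n) : Prop :=
  u 0 j = 1 /\ forall l, `|u 0 l| <= 1.

Definition peak (j0 : 'I_n) v : 'I_n := [arg max_(l > j0) `|v 0 l|]%O.

Definition normalize (j0 : 'I_n) v : 'rV[R]_n := (v 0 (peak j0 v))^-1 *: v.

Lemma peak_max j0 v l : `|v 0 l| <= `|v 0 (peak j0 v)|.
Proof. by rewrite /peak; case: arg_maxP => //= j _; apply. Qed.

Lemma peak_neq0 j0 v : v != 0 -> v 0 (peak j0 v) != 0.
Proof.
apply: contraNneq => v0; apply/eqP/rowP => l; rewrite mxE; apply/eqP.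
by rewrite -normr_le0 -(normr0 R) -v0 peak_max.
Qed.

Lemma centred_normalize j0 v : v != 0 -> centred (normalize j0 v) (peak j0 v).
Proof.
move=> /(peak_neq0 j0) vj0; split; first by rewrite mxE mulVf.
move=> l; rewrite mxE normrM normfV mulrC ler_pdivrMr ?normr_gt0 //.
by rewrite mul1r peak_max.
Qed.

Lemma dot_ge_localized u w j (e : R) : 0 <= e -> u 0 j = 1 -> w 0 j = 1 ->
  (forall l, l != j -> `|u 0 l| <= e) -> (forall l, l != j -> `|w 0 l| <= e) ->
  1 - n%:R * e ^+ 2 <= \sum_l u 0 l * w 0 l.
Proof.
move=> e0 uj wj ue we; rewrite (bigD1 j) //= uj wj mul1r lerD2l.
have : `|\sum_(l < n | l != j) u 0 l * w 0 l| <= n%:R * e ^+ 2.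
  apply: le_trans (ler_norm_sum _ _ _) _; apply: sum_le_card => [|l lj].
    exact: exprn_ge0.
  by rewrite normrM expr2 ler_pM ?ue ?we.
by rewrite ler_norml => /andP[].
Qed.

Lemma sym_eigen_form (M : 'M[R]_n) v w mu : M^T = M -> v *m M = mu *: v ->
  w *m M *m v^T = mu *: (w *m v^T).
Proof.
by move=> sM vM; rewrite -mulmxA -{1}sM -trmx_mul vM linearZ /= scalemxAr.
Qed.

Lemma sym_eigen_orthogonal (M : 'M[R]_n) u w mu nu : M^T = M ->
  u *m M = mu *: u -> w *m M = nu *: w -> (nu - mu) * (w *m u^T) 0 0 = 0.
Proof.
move=> sM uM wM; have := @sym_eigen_form M u w mu sM uM.
rewrite wM -scalemxAl => /(congr1 (fun X : 'M_1 => X 0 0)); rewrite !mxE.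
by move=> E; rewrite mulrBl E subrr.
Qed.

End RowVectors.

(* The a priori bound K / (g - K) on the off-centre entries of a centred
   eigenvector, for row sums K and diagonal gaps g (see [localization]). *)
Definition eps_loc (R : realFieldType) (K g : R) : R := K / (g - K).

Lemma eps_loc_ge0 (R : realFieldType) (K g : R) :
  0 <= K -> 2 * K < g -> 0 <= eps_loc K g.
Proof. by move=> K0 Kg; rewrite divr_ge0 //; lra. Qed.

Section Localization.
Variables (R : realFieldType) (n : nat) (M : 'M[R]_n) (K g : R).
Hypothesis sM : M^T = M.
Hypothesis row_sum : forall k : 'I_n, \sum_(l < n | l != k) `|M k l| <= K.
Hypothesis diag_gap : forall k l : 'I_n, k != l -> g <= `|M k k - M l l|.
Hypothesis K_ge0 : 0 <= K.
Hypothesis gap_gt : 2 * K < g.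

Implicit Types (u v w : 'rV[R]_n) (mu : R).

Lemma normalize_eigen j0 v mu : v *m M = mu *: v ->
  normalize j0 v *m M = mu *: normalize j0 v.
Proof. by move=> vM; rewrite -scalemxAl vM !scalerA mulrC. Qed.

Lemma eigen_entry u mu j : u *m M = mu *: u ->
  (mu - M j j) * u 0 j = \sum_(l < n | l != j) u 0 l * M j l.
Proof.
move=> uM; have := congr1 (fun v : 'rV_n => v 0 j) uM; rewrite !mxE.
rewrite (bigD1 j) //= => E.
have -> : (mu - M j j) * u 0 j = mu * u 0 j - u 0 j * M j j by ring.
rewrite -E addrAC subrr add0r; apply: eq_bigr => l _.
by rewrite -{1}sM mxE.
Qed.

Lemma offdiag_part_bound u j (B : R) :
  0 <= B -> (forall l, l != j -> `|u 0 l| <= B) ->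
  `|\sum_(l < n | l != j) u 0 l * M j l| <= B * K.
Proof.
move=> B0 uB; apply: le_trans (ler_norm_sum _ _ _) _.
apply: (@le_trans _ _ (\sum_(l < n | l != j) B * `|M j l|)).
  by apply: ler_sum => l lj; rewrite normrM ler_wpM2r // uB.
by rewrite -mulr_sumr ler_wpM2l.
Qed.

(* Localization: an eigenvector centred at j has its eigenvalue within K of
   M j j, and all its other entries are at most K / (g - K), because at an
   index l != j the factor mu - M l l is at least g - K. *)
Lemma localization u mu j : u *m M = mu *: u -> centred u j ->
  `|mu - M j j| <= K /\ forall l, l != j -> `|u 0 l| <= eps_loc K g.
Proof.
move=> uM [uj u1].
have near_j : `|mu - M j j| <= K.
  have := eigen_entry j uM; rewrite uj mulr1 => ->.
  by rewrite -[K]mul1r; apply: offdiag_part_bound.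
split=> // l lj.
have far_l : `|mu - M l l| * `|u 0 l| <= K.
  by rewrite -normrM eigen_entry // -[K]mul1r; apply: offdiag_part_bound.
have gK : g - K <= `|mu - M l l|.
  have jl : j != l by rewrite eq_sym.
  have := diag_gap jl.
  have := lerB_dist (M j j - M l l) (M j j - mu).
  rewrite (_ : M j j - M l l - (M j j - mu) = mu - M l l); last by ring.
  by rewrite [`|M j j - mu|]distrC; lra.
have gK0 : 0 < g - K by have := gap_gt; have := K_ge0; lra.
rewrite /eps_loc ler_pdivlMr //.
by apply: le_trans far_l; rewrite mulrC ler_wpM2r.
Qed.

Hypothesis small : n%:R * eps_loc K g ^+ 2 < 1.

(* Two eigenvectors centred at the same index coincide: for distinct
   eigenvalues they would be orthogonal, contradicting [dot_ge_localized];
   for equal eigenvalues a nonzero difference would be an eigenvector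
   centred at another index l, forcing g <= |M l l - M j j| <= 2 K. *)
Lemma centred_eigen_unique u u' mu mu' j :
  u *m M = mu *: u -> u' *m M = mu' *: u' -> centred u j -> centred u' j ->
  u = u'.
Proof.
move=> uM u'M cu cu'.
have [Hj uloc] := localization uM cu; have [_ u'loc] := localization u'M cu'.
have e0 := eps_loc_ge0 K_ge0 gap_gt.
have [eq_mu|neq] := eqVneq mu mu'; last first.
  have := sym_eigen_orthogonal sM uM u'M.
  move/eqP; rewrite mulf_eq0 subr_eq0 eq_sym (negbTE neq) /= mulmx_trmx_row.
  move=> /eqP dot0; exfalso.
  have := dot_ge_localized (u := u') (w := u) e0 (proj1 cu') (proj1 cu).
  by move=> /(_ u'loc uloc); rewrite dot0; have := small; lra.
rewrite -eq_mu in u'M; apply/eqP; rewrite -subr_eq0; apply/negPn/negP => w_neq0.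
have wM : (u - u') *m M = mu *: (u - u') by rewrite mulmxBl uM u'M scalerBr.
pose l := peak j (u - u').
have [Hl _] := localization (normalize_eigen j wM) (centred_normalize j w_neq0).
have lj : l != j.
  apply: contra_neq (peak_neq0 j w_neq0); rewrite -/l => ->.
  by rewrite !mxE (proj1 cu) (proj1 cu') subrr.
have := gap_gt; have := diag_gap lj; have := ler_distD mu (M l l) (M j j).
by rewrite distrC in Hl; clear w_neq0; lra.
Qed.

End Localization.

Lemma sorted_list_of_increasing (R : realFieldType) n (f : 'I_n.+1 -> R)
    (lam : seq R) :
  (forall i j : 'I_n.+1, (i < j)%N -> f i < f j) -> (forall k, f k \in lam) ->
  size lam = n.+1 -> sorted <=%R lam -> forall k : 'I_n.+1, lam`_k = f k.
Proof.
move=> f_incr f_lam slam sorted_lam k.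
pose s := mkseq (fun m => f (inord m)) n.+1.
have s_sorted : sorted <%R s.
  apply/(sortedP 0) => i; rewrite size_mkseq => hi.
  rewrite !nth_mkseq //; last exact: ltnW.
  by apply: f_incr; rewrite !inordK //; apply: ltnW.
have s_uniq := lt_sorted_uniq s_sorted.
have s_lam : {subset s <= lam} by move=> x /mapP [m _ ->]; apply: f_lam.
have s_size : (size lam <= size s)%N by rewrite size_mkseq slam.
have [_ s_eq] := uniq_min_size s_uniq s_lam s_size.
have lam_uniq : uniq lam := leq_size_uniq s_uniq s_lam s_size.
have s_le : sorted <=%R s by move: s_sorted; rewrite lt_sorted_uniq_le => /andP[].
have s_perm := uniq_perm s_uniq lam_uniq s_eq.
have <- : s = lam := sorted_eq le_trans le_anti s_le sorted_lam s_perm.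
by rewrite nth_mkseq // inord_val.
Qed.

Section SpectralLocalization.
Variables (R : realType) (n' : nat) (M : 'M[R]_n'.+1) (K g : R) (lam : seq R).
Local Notation n := n'.+1.
Hypothesis sM : M^T = M.
Hypothesis row_sum : forall k : 'I_n, \sum_(l < n | l != k) `|M k l| <= K.
Hypothesis diag_gap : forall k l : 'I_n, k != l -> g <= `|M k k - M l l|.
Hypothesis K_ge0 : 0 <= K.
Hypothesis gap_gt : 2 * K < g.
Hypothesis small : n%:R * eps_loc K g ^+ 2 < 1.
Hypothesis diag_incr : forall i j : 'I_n, (i < j)%N -> M i i < M j j.
Hypothesis eig_lam : sorted_eigenvalues M lam.

(* The rows of a
   diagonalizing matrix are eigenvectors; normalised at their peaks they are
   centred, and by [centred_eigen_unique] the n rows (which are independent)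
   have n distinct centres. *)
Lemma centred_eigenbasis : exists (mu : 'I_n -> R) (u : 'I_n -> 'rV[R]_n),
  forall k, [/\ u k *m M = mu k *: u k, centred (u k) k & eigenvalue M (mu k)].
Proof.
have [slam _ clam] := eig_lam.
have [P P_unit P_diag] := sym_diagonalizable sM slam clam.
set D := P *m M *m invmx P in P_diag.
have PM : P *m M = D *m P by rewrite /D mulmxKV.
clearbody D.
have row_eigen i : row i P *m M = D i i *: row i P.
  rewrite -row_mul PM; apply/rowP => l; rewrite !mxE.
  rewrite (bigD1 i) //= big1 ?addr0 // => j ji.
  by rewrite (is_diag_mxP P_diag) ?mul0r // eq_sym.
have row_inv i : row i P *m invmx P = row i 1%:M by rewrite -row_mul mulmxV.
have row_neq0 i : row i P != 0.
  apply: contra_neq (@oner_neq0 R) => Pi0.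
  by have /rowP/(_ i) := row_inv i; rewrite Pi0 mul0mx !mxE eqxx.
pose pi i := peak ord0 (row i P); pose u i := normalize ord0 (row i P).
have u_eigen i : u i *m M = D i i *: u i by apply/normalize_eigen/row_eigen.
have u_centred i : centred (u i) (pi i) by apply: centred_normalize.
have pi_inj : injective pi.
  move=> i i' pi_eq; apply/eqP; apply: contraT => neq_ii'.
  have := centred_eigen_unique sM row_sum diag_gap K_ge0 gap_gt small
    (u_eigen i) (u_eigen i') (u_centred i) (eq_ind_r _ (u_centred i') pi_eq).
  move/(congr1 (fun v => (v *m invmx P) 0 i)).
  rewrite -!scalemxAl !row_inv !mxE eqxx eq_sym (negbTE neq_ii') mulr1 mulr0.
  have := peak_neq0 ord0 (row_neq0 i); rewrite mxE => /negbTE Pi_peak.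
  by move/eqP; rewrite invr_eq0 Pi_peak.
pose sigma := invF pi_inj.
exists (fun k => D (sigma k) (sigma k)), (fun k => u (sigma k)) => k.
split; [exact: u_eigen | by rewrite -{2}(f_invF pi_inj k) |].
by apply/eigenvalueP; exists (row (sigma k) P); [exact: row_eigen | exact: row_neq0].
Qed.

(* The eigenvalues of the centred eigenbasis increase with their centre
   (as the diagonal does, with gaps g > 2 K), so they are the sorted list. *)
Theorem spectral_localization (k : 'I_n) : `|lam`_k - M k k| <= K /\
  exists u : 'rV[R]_n, [/\ u *m M = lam`_k *: u, u 0 k = 1 &
    forall l, l != k -> `|u 0 l| <= eps_loc K g].
Proof.
have [slam sorted_lam clam] := eig_lam.
have [mu [u mu_u]] := centred_eigenbasis.
have u_eigen j : u j *m M = mu j *: u j by case: (mu_u j).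
have u_centred j : centred (u j) j by case: (mu_u j).
have loc j :=
  localization sM row_sum diag_gap K_ge0 gap_gt (u_eigen j) (u_centred j).
have mu_incr (i j : 'I_n) : (i < j)%N -> mu i < mu j.
  move=> ij; have ij' : i != j by rewrite neq_ltn ij.
  have gap : g <= M j j - M i i.
    by have := diag_gap ij'; rewrite distrC ger0_norm // subr_ge0 ltW // diag_incr.
  have := proj1 (loc i); have := proj1 (loc j); have := gap_gt.
  by rewrite !ler_distl => Kg /andP[j1 j2] /andP[i1 i2]; lra.
have mu_lam j : mu j \in lam.
  by rewrite -root_prod_XsubC -clam -eigenvalue_root_char; case: (mu_u j).
rewrite (sorted_list_of_increasing mu_incr mu_lam slam sorted_lam k).
split; first exact: (proj1 (loc k)).
by exists (u k); split; [exact: u_eigen | exact: (proj1 (u_centred k)) |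
  exact: (proj2 (loc k))].
Qed.

End SpectralLocalization.

Section QuadraticForm.
Variables (R : realFieldType) (n : nat) (S : 'M[R]_n) (s0 s1 e : R).
Variables (v w : 'rV[R]_n) (k : 'I_n).
Hypothesis S_diag : forall m, s0 <= S m m <= s1.
Hypothesis S_offdiag : forall m l, m != l -> `|S m l| <= s1 / n%:R.
Hypothesis s0_ge0 : 0 <= s0.
Hypothesis e_ge0 : 0 <= e.
Hypothesis v_k : v 0 k = 1.
Hypothesis v_loc : forall l, l != k -> `|v 0 l| <= e.
Hypothesis w_k : w 0 k = 1.
Hypothesis w_loc : forall l, l != k -> `|w 0 l| <= e.

Let s1_ge0 : 0 <= s1.
Proof. by have := s0_ge0; have /andP[lo hi] := S_diag k; lra. Qed.

Let n_pos : 0 < n%:R :> R.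
Proof. by rewrite ltr0n; apply: leq_ltn_trans (ltn_ord k). Qed.

Let n_offdiag : n%:R * (s1 / n%:R) = s1.
Proof. by rewrite mulrC -mulrA mulVf ?mulr1 // (gt_eqF n_pos). Qed.

Let v_l1 : \sum_l `|v 0 l| <= 1 + n%:R * e.
Proof. by rewrite (bigD1 k) //= v_k normr1 lerD2l sum_le_card. Qed.

Lemma Sv_centre : s0 - s1 * e <= \sum_l S k l * v 0 l.
Proof.
rewrite (bigD1 k) //= v_k mulr1.
have : `|\sum_(l < n | l != k) S k l * v 0 l| <= s1 * e.
  apply: le_trans (ler_norm_sum _ _ _) _.
  rewrite -n_offdiag -mulrA; apply: sum_le_card.
    by rewrite mulr_ge0 ?divr_ge0 ?s1_ge0.
  by move=> l lk; rewrite normrM ler_pM // ?S_offdiag ?v_loc // eq_sym.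
rewrite ler_norml => /andP[lo _]; have /andP[dk _] := S_diag k; lra.
Qed.

Lemma Sv_off m : m != k -> `|\sum_l S m l * v 0 l| <= s1 / n%:R + 2 * s1 * e.
Proof.
move=> mk; rewrite (bigD1 m) //=; apply: le_trans (ler_normD _ _) _.
have diag_term : `|S m m * v 0 m| <= s1 * e.
  rewrite normrM ler_pM ?v_loc //; have /andP[a b] := S_diag m.
  by rewrite ger0_norm // (le_trans s0_ge0 a).
have off_terms :
    `|\sum_(l < n | l != m) S m l * v 0 l| <= s1 / n%:R * (1 + n%:R * e).
  apply: le_trans (ler_norm_sum _ _ _) _.
  apply: (@le_trans _ _ (\sum_l s1 / n%:R * `|v 0 l|)); last first.
    by rewrite -mulr_sumr ler_wpM2l ?divr_ge0 ?s1_ge0 ?v_l1.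
  rewrite [X in _ <= X](bigD1 m) //= -[X in X <= _]add0r.
  rewrite lerD ?mulr_ge0 ?s1_ge0 ?invr_ge0 ?ler0n //.
  by apply: ler_sum => l lm; rewrite normrM ler_wpM2r // S_offdiag // eq_sym.
have : s1 / n%:R * (1 + n%:R * e) = s1 / n%:R + s1 * e.
  by rewrite mulrDr mulr1 mulrA mulfVK ?(gt_eqF n_pos).
lra.
Qed.

Lemma form_lower_bound :
  s0 - 2 * s1 * e - 2 * s1 * (n%:R * e ^+ 2) <= (w *m S *m v^T) 0 0.
Proof.
rewrite -mulmxA mxE (bigD1 k) //= w_k mul1r.
have Sv_entry m : (S *m v^T) m 0 = \sum_l S m l * v 0 l.
  by rewrite mxE; apply: eq_bigr => l _; rewrite mxE.
have : `|\sum_(m < n | m != k) w 0 m * (S *m v^T) m 0| <=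
    n%:R * (e * (s1 / n%:R + 2 * s1 * e)).
  apply: le_trans (ler_norm_sum _ _ _) _; apply: sum_le_card.
    by rewrite mulr_ge0 // addr_ge0 ?mulr_ge0 ?s1_ge0 ?invr_ge0 ?ler0n.
  by move=> m mk; rewrite normrM Sv_entry ler_pM ?w_loc ?Sv_off.
have -> : n%:R * (e * (s1 / n%:R + 2 * s1 * e)) = s1 * e + 2 * s1 * (n%:R * e ^+ 2).
  by rewrite mulrCA mulrDr n_offdiag; ring.
rewrite ler_norml Sv_entry => /andP[lo _]; have := Sv_centre; lra.
Qed.

End QuadraticForm.

Definition size_threshold (R : realFieldType) (c C s0 s1 T : R) : R :=
  let K := C + T * s1 in let d := 2 * K / c in
  2 * (K + T * s1) / c + d ^+ 2 + 2 * s1 * (d + d ^+ 2) / s0.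

(* Beyond the threshold, with K = C + T s1 and g = c x - T s1, the gap
   dominates the row sums and eps_loc K g <= (2 K / c) / x is small enough. *)
Lemma above_size_threshold (R : realFieldType) (c C s0 s1 T x : R) :
  0 < c -> 0 < C -> 0 < s0 -> 0 < s1 -> 0 < T -> size_threshold c C s0 s1 T < x ->
  let K := C + T * s1 in let g := c * x - T * s1 in let e := eps_loc K g in
  [/\ 2 * K < g, x * e ^+ 2 < 1 & 2 * s1 * e + 2 * s1 * (x * e ^+ 2) < s0].
Proof.
rewrite /size_threshold => c0 C0 s00 s10 T0 /=.
set K := C + T * s1; set d := 2 * K / c; set g := c * x - T * s1.
have Ts10 : 0 < T * s1 by rewrite mulr_gt0.
have K0 : 0 < K by rewrite /K; lra.
have d0 : 0 <= d by rewrite /d divr_ge0 //; lra.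
have gap_term_ge0 : 0 <= 2 * (K + T * s1) / c by rewrite divr_ge0 //; lra.
have form_term_ge0 : 0 <= 2 * s1 * (d + d ^+ 2) / s0.
  by rewrite divr_ge0 ?mulr_ge0 ?addr_ge0 ?exprn_ge0 //; lra.
have d2_ge0 : 0 <= d ^+ 2 := exprn_ge0 2 d0.
move=> x_gt.
have gap_x : 2 * (K + T * s1) < c * x.
  by rewrite -ltr_pdivrMl // mulrC; lra.
have x0 : 0 < x by lra.
have gK : c * x / 2 <= g - K by rewrite /g; lra.
have ex : eps_loc K g * x <= d.
  rewrite /eps_loc mulrAC ler_pdivrMr; last by lra.
  rewrite /d mulrAC ler_pdivlMr // -mulrA; apply: (le_trans _ (ler_wpM2l _ gK)).
    by rewrite [X in _ <= X](_ : _ = K * (x * c)) //; field.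
  lra.
have e0 : 0 <= eps_loc K g by apply: eps_loc_ge0; lra.
have ex2 : (eps_loc K g * x) ^+ 2 <= d ^+ 2.
  by apply: lerXn2r; rewrite ?nnegrE // mulr_ge0 // ltW.
split; first lra.
- rewrite -(ltr_pM2l x0) mulr1 mulrA -expr2 -exprMn mulrC.
  by apply: le_lt_trans ex2 _; lra.
- set e := eps_loc K g in ex ex2 *.
  have -> : 2 * s1 * e + 2 * s1 * (x * e ^+ 2) =
      (2 * s1 * (e * x) + 2 * s1 * (e * x) ^+ 2) / x by field; lra.
  rewrite ltr_pdivrMr //.
  have lin_term : 2 * s1 * (e * x) <= 2 * s1 * d by rewrite ler_wpM2l //; lra.
  have sq_term : 2 * s1 * (e * x) ^+ 2 <= 2 * s1 * d ^+ 2 by rewrite ler_wpM2l //; lra.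
  have x_large : 2 * s1 * (d + d ^+ 2) < s0 * x by rewrite -ltr_pdivrMl //; lra.
  lra.
Qed.

Lemma eigen_shift (R : realFieldType) n (A S : 'M[R]_n) (t mu nu : R)
    (v w : 'rV[R]_n) :
  A^T = A -> v *m A = mu *: v -> w *m (A + t *: S) = nu *: w ->
  (nu - mu) * (w *m v^T) 0 0 = t * (w *m S *m v^T) 0 0.
Proof.
move=> sA vA wP.
have := congr1 (mulmx^~ v^T) wP.
rewrite mulmxDr mulmxDl (@sym_eigen_form _ _ A v w mu sA vA).
rewrite -scalemxAr -!scalemxAl.
move/(congr1 (fun X : 'M_1 => X 0 0)); rewrite !mxE => E.
by rewrite mulrBl -E; ring.
Qed.

Section Interlacing.
Variables (R : realType) (n' : nat) (A S : 'M[R]_n'.+1) (t C G K g s0 s1 : R).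
Variables (lam lamt : seq R).
Local Notation n := n'.+1.
Local Notation P := (A + t *: S).
Hypothesis A_sym : A^T = A.
Hypothesis A_incr : forall i j : 'I_n, (i < j)%N -> A i i < A j j.
Hypothesis A_row : forall k : 'I_n, \sum_(l < n | l != k) `|A k l| <= C.
Hypothesis A_gap : forall k l : 'I_n, k != l -> G <= `|A k k - A l l|.
Hypothesis S_sym : S^T = S.
Hypothesis S_diag : forall k : 'I_n, s0 <= S k k <= s1.
Hypothesis S_offdiag : forall k l : 'I_n, k != l -> `|S k l| <= s1 / n%:R.
Hypothesis s0_ge0 : 0 <= s0.
Hypothesis t_gt0 : 0 < t.
Hypothesis K_ge : C + t * s1 <= K.
Hypothesis g_le : g + t * s1 <= G.
Hypothesis gap_gt : 2 * K < g.
Hypothesis small : n%:R * eps_loc K g ^+ 2 < 1.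
Hypothesis form_pos :
  2 * s1 * eps_loc K g + 2 * s1 * (n%:R * eps_loc K g ^+ 2) < s0.
Hypothesis A_eig : sorted_eigenvalues A lam.
Hypothesis P_eig : sorted_eigenvalues P lamt.

Let s1_ge0 : 0 <= s1.
Proof. by have /andP[lo hi] := S_diag ord0; have := s0_ge0; lra. Qed.

Let tS_diag k : 0 <= t * S k k <= t * s1.
Proof.
have /andP[lo hi] := S_diag k; have t_ge0 := ltW t_gt0.
by rewrite mulr_ge0 ?(le_trans s0_ge0 lo) //= ler_wpM2l.
Qed.

Let K_ge0 : 0 <= K.
Proof.
have := A_row ord0; have := K_ge; have := mulr_ge0 (ltW t_gt0) s1_ge0.
have : 0 <= \sum_(l < n | l != ord0) `|A ord0 l| by rewrite sumr_ge0.
lra.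
Qed.

Let A_row_K k : \sum_(l < n | l != k) `|A k l| <= K.
Proof.
by have := A_row k; have := K_ge; have := mulr_ge0 (ltW t_gt0) s1_ge0; lra.
Qed.

Let A_gap_g k l : k != l -> g <= `|A k k - A l l|.
Proof.
move=> kl; have := A_gap kl; have := g_le.
by have := mulr_ge0 (ltW t_gt0) s1_ge0; lra.
Qed.

Lemma perturbed_row_sum k : \sum_(l < n | l != k) `|P k l| <= K.
Proof.
apply: (@le_trans _ _ (\sum_(l < n | l != k) (`|A k l| + t * (s1 / n%:R)))).
  apply: ler_sum => l lk; rewrite !mxE; apply: le_trans (ler_normD _ _) _.
  by rewrite lerD2l normrM gtr0_norm // ler_pM2l // S_offdiag // eq_sym.
rewrite big_split /=.
have : \sum_(l < n | l != k) t * (s1 / n%:R) <= n%:R * (t * (s1 / n%:R)).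
  by apply: sum_le_card => //; rewrite mulr_ge0 ?divr_ge0 ?s1_ge0 ?ltW.
have n_neq0 : n%:R != 0 :> R by rewrite pnatr_eq0.
have -> : n%:R * (t * (s1 / n%:R)) = t * s1.
  by rewrite mulrCA [_ * (s1 / _)]mulrCA divff // mulr1.
by have := A_row k; have := K_ge; lra.
Qed.

Lemma perturbed_gap k l : k != l -> g <= `|P k k - P l l|.
Proof.
move=> kl; rewrite !mxE.
have := lerB_dist (A k k - A l l) (t * S l l - t * S k k).
have -> : A k k - A l l - (t * S l l - t * S k k) =
  A k k + t * S k k - (A l l + t * S l l) by ring.
have /andP[k0 k1] := tS_diag k; have /andP[l0 l1] := tS_diag l.
have : `|t * S l l - t * S k k| <= t * s1 by rewrite ler_distl; apply/andP; lra.
by have := A_gap kl; have := g_le; lra.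
Qed.

Lemma perturbed_incr (i j : 'I_n) : (i < j)%N -> P i i < P j j.
Proof.
move=> ij; rewrite !mxE; have ij' : i != j by rewrite neq_ltn ij.
have gap : G <= A j j - A i i.
  by have := A_gap ij'; rewrite distrC ger0_norm // subr_ge0 ltW // A_incr.
have /andP[i0 i1] := tS_diag i; have /andP[j0 j1] := tS_diag j.
by have := g_le; have := gap_gt; have := K_ge0; lra.
Qed.

Let P_sym : P^T = P.
Proof. by rewrite linearD linearZ /= A_sym S_sym. Qed.

Let e_ge0 : 0 <= eps_loc K g.
Proof. exact: eps_loc_ge0 K_ge0 gap_gt. Qed.

(* lam_i <= lamt_i: the eigenvectors v of A and w of A + t S localized at i
   have <w, v> > 0 and w S v^T > 0, so [eigen_shift] gives lamt_i > lam_i. *)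
Lemma lower_interlacing i : (i < n)%N -> lam`_i <= lamt`_i.
Proof.
move=> lt_in; pose k := Ordinal lt_in.
have [_ [v [vA v_k v_loc]]] := spectral_localization A_sym A_row_K A_gap_g
  K_ge0 gap_gt small A_incr A_eig k.
have [_ [w [wP w_k w_loc]]] := spectral_localization P_sym perturbed_row_sum
  perturbed_gap K_ge0 gap_gt small perturbed_incr P_eig k.
have dot_pos : 0 < (w *m v^T) 0 0.
  rewrite mulmx_trmx_row; have := dot_ge_localized e_ge0 w_k v_k w_loc v_loc.
  by have := small; lra.
have form_gt0 : 0 < (w *m S *m v^T) 0 0.
  have := form_lower_bound S_diag S_offdiag s0_ge0 e_ge0 v_k v_loc w_k w_loc.
  by have := form_pos; lra.
have : 0 < (lamt`_k - lam`_k) * (w *m v^T) 0 0.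
  by rewrite (eigen_shift A_sym vA wP) mulr_gt0.
by rewrite pmulr_lgt0 // subr_gt0 => /ltW.
Qed.

(* lamt_i <= lam_(i+1): lamt_i is within K of A i i + t S i i, lam_(i+1)
   within K of A (i+1) (i+1), and these diagonal entries are G apart. *)
Lemma upper_interlacing i : (i.+1 < n)%N -> lamt`_i <= lam`_i.+1.
Proof.
move=> lt_in; pose k := Ordinal (ltnW lt_in); pose k1 := Ordinal lt_in.
have [near_k _] := spectral_localization P_sym perturbed_row_sum
  perturbed_gap K_ge0 gap_gt small perturbed_incr P_eig k.
have [near_k1 _] := spectral_localization A_sym A_row_K A_gap_g
  K_ge0 gap_gt small A_incr A_eig k1.
have kk1 : k != k1 by rewrite neq_ltn /= ltnSn.
have gap : G <= A k1 k1 - A k k.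
  by have := A_gap kk1; rewrite distrC ger0_norm // subr_ge0 ltW // A_incr /=.
move: near_k near_k1; rewrite !mxE /= !ler_distl => /andP[_ hk] /andP[hk1 _].
have /andP[_ tS] := tS_diag k.
by have := g_le; have := gap_gt; lra.
Qed.

End Interlacing.

Theorem theorem2 (R : realType) (c C s0 s1 T : R) :
  0 < c -> 0 < C -> 0 < s0 -> 0 < s1 -> 0 < T ->
  exists N : nat, forall (n : nat), (N <= n)%N ->
  forall (A S : 'M[R]_n) (t : R),
    posdef_mx A ->
    (forall i j : 'I_n, (i < j)%N -> A i i < A j j) ->
    (forall k l : 'I_n, k != l -> c * n%:R <= `|A k k - A l l|) ->
    (forall k : 'I_n, \sum_(l < n | l != k) `|A k l| <= C) ->
    symmetric_mx S ->
    (forall k : 'I_n, s0 <= S k k <= s1) ->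
    (forall k l : 'I_n, k != l -> `|S k l| <= s1 / n%:R) ->
    0 < t -> t <= T ->
    forall lam lamt : seq R,
      sorted_eigenvalues A lam ->
      sorted_eigenvalues (A + t *: S) lamt ->
      (forall i : nat, (i < n)%N -> lam`_i <= lamt`_i) /\
      (forall i : nat, (i.+1 < n)%N -> lamt`_i <= lam`_i.+1).
Proof.
move=> c0 C0 s00 s10 T0; set thr := size_threshold c C s0 s1 T.
exists (Num.Def.archi_bound `|thr|) => -[|n'] n_ge A S t.
  by move=> *; split=> i; rewrite ltn0.
move=> [A_sym _] A_incr A_gap A_row S_sym S_diag S_off t_gt0 t_le.
move=> lam lamt A_eig P_eig.
have n_large : thr < n'.+1%:R.
  apply: le_lt_trans (ler_norm thr) (lt_le_trans (archi_boundP (normr_ge0 thr)) _).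
  by rewrite ler_nat.
have [gap_gt small form_pos] := above_size_threshold c0 C0 s00 s10 T0 n_large.
have tT : t * s1 <= T * s1 by rewrite ler_wpM2r // ltW.
have K_ge : C + t * s1 <= C + T * s1 by lra.
have g_le : c * n'.+1%:R - T * s1 + t * s1 <= c * n'.+1%:R by lra.
have s0_ge0 := ltW s00.
split=> i lt_in.
- exact: (lower_interlacing A_sym A_incr A_row A_gap S_sym S_diag S_off s0_ge0
    t_gt0 K_ge g_le gap_gt small form_pos A_eig P_eig).
- exact: (upper_interlacing A_sym A_incr A_row A_gap S_sym S_diag S_off s0_ge0
    t_gt0 K_ge g_le gap_gt small A_eig P_eig).
Qed.
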